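(* Let $(X,d)$ be a path-connected compact metric space, $x_0\in X$, $n\geq1$. Then the topology on $\pi_n(X,x_0)$ induced by the pseudometric $\rho$ is at least as fine as the shape topology on $\pi_n(X,x_0)$.
   Context: $\Omega^n(X,x_0)$ is the set of continuous maps $\alpha:[0,1]^n\to X$ with $\alpha(\partial[0,1]^n)=\{x_0\}$, with uniform metric $\mu(\alpha,\beta)=\sup_t d(\alpha(t),\beta(t))$, and $\rho(a,b)=\inf\{\mu(\alpha,\beta)\mid\alpha\in a,\beta\in b\}$. Shape topology: let $\mathrm{cov}(X)$ be the set of pairs $(\mathscr{U},U_0)$, $\mathscr{U}$ a locally finite open cover of $X$ and $U_0\in\mathscr{U}$ containing $x_0$. Let $|N(\mathscr{U})|$ be the geometric realization of the nerve of $\mathscr{U}$. A partition of unity $\{\phi_U\}$ subordinate to $\mathscr{U}$ with $\phi_{U_0}(x_0)=1$ gives a canonical map $p_{\mathscr{U}}:(X,x_0)\to(|N(\mathscr{U})|,U_0)$ with barycentric coordinates $\phi_U(x)$. The shape topology is the group topology on $\pi_n(X,x_0)$ having the subgroups $\ker(p_{\mathscr{U}\#}:\pi_n(X,x_0)\to\pi_n(|N(\mathscr{U})|,U_0))$, $(\mathscr{U},U_0)\in\mathrm{cov}(X)$, as a neighborhood base of the identity (equivalently the initial topology with respect to the canonical homomorphism to the shape homotopy group $\varprojlim\pi_n(|N(\mathscr{U})|,U_0)$ of discrete groups). *)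

From HB Require Import structures.
From mathcomp Require Import all_boot all_order all_algebra.
From mathcomp Require Import all_classical all_reals all_analysis.
Set Implicit Arguments. Unset Strict Implicit. Unset Printing Implicit Defensive.
Import Order.TTheory GRing.Theory Num.Theory numFieldTopology.Exports.
Local Open Scope classical_set_scope.
Local Open Scope ring_scope.

Section Defs.
Variable R : realType.

Definition unitI : set R := [set s | 0 <= s <= 1].

Definition ucube (n : nat) : set 'rV[R]_n :=
  [set t | forall i : 'I_n, 0 <= t ord0 i <= 1].

Definition ucube_bd (n : nat) : set 'rV[R]_n :=
  [set t | @ucube n t /\ exists i : 'I_n, t ord0 i = 0 \/ t ord0 i = 1].

Definition Omega_in {Y : topologicalType} (S : set Y) (y0 : Y) (n : nat)
  : set ('rV[R]_n -> Y) :=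
  [set f : 'rV[R]_n -> Y | {within @ucube n, continuous f} /\
           (forall t, @ucube n t -> S (f t)) /\
           (forall t, @ucube_bd n t -> f t = y0)].

Definition rel_htpy {Y : topologicalType} (S : set Y) (y0 : Y) (n : nat)
  (f g : 'rV[R]_n -> Y) : Prop :=
  exists H : 'rV[R]_n * R -> Y,
    {within @ucube n `*` unitI, continuous H} /\
    (forall p, (@ucube n `*` unitI) p -> S (H p)) /\
    (forall t, @ucube n t -> H (t, 0) = f t /\ H (t, 1) = g t) /\
    (forall t s, @ucube_bd n t -> unitI s -> H (t, s) = y0).

Section Space.
Variable X : metricType R.

Definition Omega (x0 : X) (n : nat) : set ('rV[R]_n -> X) :=
  @Omega_in _ [set: X] x0 n.

Definition htpy_class (x0 : X) (n : nat) (alpha : 'rV[R]_n -> X)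
  : set ('rV[R]_n -> X) :=
  [set beta | @Omega x0 n beta /\ rel_htpy [set: X] x0 alpha beta].

Definition pin_set (x0 : X) (n : nat) : set (set ('rV[R]_n -> X)) :=
  [set a | exists2 alpha, @Omega x0 n alpha & a = htpy_class x0 alpha].

Definition mu_dist (n : nat) (alpha beta : 'rV[R]_n -> X) : R :=
  sup [set mdist (alpha t) (beta t) | t in @ucube n].

Definition rho_dist (n : nat) (a b : set ('rV[R]_n -> X)) : R :=
  inf [set r | exists alpha beta, a alpha /\ b beta /\ r = mu_dist alpha beta].

Definition rho_open (x0 : X) (n : nat) (V : set (set ('rV[R]_n -> X))) : Prop :=
  V `<=` @pin_set x0 n /\
  forall a, V a -> exists2 e : R, 0 < e &
    forall b, @pin_set x0 n b -> rho_dist a b < e -> V b.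

Definition lf_open_cover (C : set (set X)) : Prop :=
  (forall U, C U -> open U) /\
  (forall x, exists2 U, C U & U x) /\
  (forall x : X, exists N : set X, nbhs x N /\ finite_set [set U | C U /\ U `&` N !=set0]).

Definition pou_subordinate (C : set (set X)) (phi : set X -> X -> R) : Prop :=
  (forall U, continuous (phi U)) /\
  (forall U x, 0 <= phi U x) /\
  (forall U, ~ C U -> forall x, phi U x = 0) /\
  (forall U, closure [set x | phi U x != 0] `<=` U) /\
  (forall x, finite_set [set U | phi U x != 0] /\
             \sum_(U \in [set: set X]) phi U x = 1).

(* geometric realization |N(C)| of the nerve of C, as the set of barycentric
   coordinate functions, with the topology induced from the product topology *)
Definition nerve_real (C : set (set X)) : set {ptws set X -> R} :=
  [set t | (forall U, 0 <= t U) /\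
           finite_set [set U | t U != 0] /\
           \sum_(U \in [set: set X]) t U = 1 /\
           [set U | t U != 0] `<=` C /\
           exists x : X, forall U, t U != 0 -> U x].

Definition nerve_vertex (U0 : set X) : {ptws set X -> R} :=
  fun U => (U == U0)%:R.

Definition canon_map (phi : set X -> X -> R) : X -> {ptws set X -> R} :=
  fun x U => phi U x.

(* open sets of the shape topology on pi_n(X,x0): V is open iff for every
   a in V there is (C,U0) in cov(X) (with a canonical map p) such that the
   coset a * ker(p_#) -- i.e. the fibre of p_# through a -- lies in V *)
Definition shape_open (x0 : X) (n : nat) (V : set (set ('rV[R]_n -> X))) : Prop :=
  V `<=` @pin_set x0 n /\
  forall a, V a -> exists (C : set (set X)) (U0 : set X) (phi : set X -> X -> R),
    [/\ lf_open_cover C, C U0, U0 x0,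
        pou_subordinate C phi /\ phi U0 x0 = 1 &
        forall b, @pin_set x0 n b ->
          (forall alpha beta, a alpha -> b beta ->
             rel_htpy (nerve_real C) (nerve_vertex U0)
                      (canon_map phi \o alpha) (canon_map phi \o beta)) ->
          V b].

Definition path_conn : Prop :=
  forall x y : X, exists gamma : R -> X,
    {within unitI, continuous gamma} /\ gamma 0 = x /\ gamma 1 = y.

End Space.
End Defs.

Arguments ucube {R} n.
Arguments ucube_bd {R} n.
Arguments Omega_in {R Y} S y0 n.
Arguments Omega {R X} x0 n.
Arguments pin_set {R X} x0 n.
Arguments rho_open {R X} x0 n V.
Arguments shape_open {R X} x0 n V.

From HB Require Import structures.
From mathcomp Require Import all_boot all_order all_algebra.
From mathcomp Require Import all_classical all_reals all_analysis.
From mathcomp Require Import finmap lra.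
Set Implicit Arguments. Unset Strict Implicit. Unset Printing Implicit Defensive.
Import Order.TTheory GRing.Theory Num.Theory numFieldTopology.Exports.
Local Open Scope classical_set_scope.
Local Open Scope ring_scope.

(** Fix a shape neighbourhood of [a], given by a locally finite
  cover [C] with a partition of unity [phi] and canonical map [p].  As [X] is
  compact, [C] has a Lebesgue number [e] for the supports of [phi]: whenever
  [d(z, y) < e], every [U] with [phi_U(z) <> 0] contains [y].  If
  [rho(a, b) < e], choose representatives [alpha], [beta] with
  [mu(alpha, beta) < e]; then for each [t] the barycentric supports of
  [p(alpha t)] and [p(beta t)] both consist of sets containing [alpha t],
  hence span a common simplex of the nerve, and the straight-line homotopy
  from [p o alpha] to [p o beta] stays in [|N(C)|].  So [p_#] identifies [a]
  and [b]. *)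

Lemma continuous_within_comp (T U V : topologicalType) (A : set T) (B : set U)
    (f : T -> U) (g : U -> V) :
  (forall x, A x -> B (f x)) ->
  {within A, continuous f} -> {within B, continuous g} ->
  {within A, continuous (g \o f)}.
Proof.
move=> AB /subspace_continuousP cf /subspace_continuousP cg.
apply/subspace_continuousP => x Ax; apply: cvg_trans (cg _ (AB _ Ax)) => W /= Wg.
have := cf _ Ax _ Wg; rewrite /nbhs /= /within /=.
by apply: filterS => z Hz Az; exact: Hz Az (AB _ Az).
Qed.

Lemma fst_continuous (T U : topologicalType) : continuous (@fst T U).
Proof. by move=> p; exact: cvg_fst. Qed.

Lemma snd_continuous (T U : topologicalType) : continuous (@snd T U).
Proof. by move=> p; exact: cvg_snd. Qed.

Lemma ptws_cvg (I T : Type) (V : topologicalType) (F : set_system T)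
    {FF : Filter F} (f : T -> {ptws I -> V}) (g : {ptws I -> V}) :
  (forall i, (fun t => f t i) @ F --> g i) -> f @ F --> g.
Proof.
move=> fg; apply/cvg_sup => i U [? /= [[W oW <-]] Wg] /filterS; apply.
by apply: (fg i); exact: open_nbhs_nbhs.
Qed.

Lemma fsbig_setT_support (T : choiceType) (R : Type) {idx : R}
    {op : Monoid.com_law idx} (S : set T) (g : T -> R) :
  finite_set S -> (forall x, ~ S x -> g x = idx) ->
  \big[op/idx]_(x \in [set: T]) g x = \big[op/idx]_(x \in S) g x.
Proof. by move=> finS gS; apply/esym/fsbig_widen => // x [_ /gS]. Qed.

Section Cube.
Variable R : realType.

Lemma ucube_closed n : closed (@ucube R n).
Proof.
have -> : @ucube R n = \bigcap_(i in [set: 'I_n])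
    ((fun t : 'rV[R]_n => t ord0 i) @^-1` [set s | 0 <= s <= 1]).
  by apply/seteqP; split => t /= Ht i; [move=> _|]; apply: Ht.
apply: closed_bigI => i _; apply: preimage_closed.
  by move=> t _; exact: coord_continuous.
have -> : [set s : R | 0 <= s <= 1] = [set s | 0 <= s] `&` [set s | s <= 1].
  by apply/seteqP; split => s /=; [move/andP|move=> [-> ->]].
by apply: closedI; [exact: closed_ge|exact: closed_le].
Qed.

Lemma ucube_slab_closed n (a b : R) :
  closed [set p : 'rV[R]_n * R | ucube n p.1 /\ a <= p.2 <= b].
Proof.
have -> : [set p : 'rV[R]_n * R | ucube n p.1 /\ a <= p.2 <= b] =
    fst @^-1` ucube n `&` snd @^-1` [set s | a <= s] `&` snd @^-1` [set s | s <= b].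
  apply/seteqP; split => p /=; first by move=> [? /andP[]].
  by move=> [[? ?] ?]; split => //; apply/andP.
apply: closedI; first apply: closedI; apply: preimage_closed.
- by move=> ? _; exact: fst_continuous.
- exact: ucube_closed.
- by move=> ? _; exact: snd_continuous.
- exact: closed_ge.
- by move=> ? _; exact: snd_continuous.
- exact: closed_le.
Qed.

Lemma within_time_affine n (Y : topologicalType) (A : set ('rV[R]_n * R))
    (a b : R) (H : 'rV[R]_n * R -> Y) :
  (forall p, A p -> (ucube n `*` @unitI R) (p.1, a * p.2 + b)) ->
  {within ucube n `*` @unitI R, continuous H} ->
  {within A, continuous (fun p => H (p.1, a * p.2 + b))}.
Proof.
move=> AB cH; apply: (continuous_within_comp AB) => //.
apply/continuous_subspaceT => p.
apply: (@cvg_pair _ _ _ _ (nbhs p.1) (nbhs (a * p.2 + b))); first exact: cvg_fst.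
by apply: cvgD; [apply: cvgM; [exact: cvg_cst|exact: cvg_snd]|exact: cvg_cst].
Qed.

End Cube.

Section RelHomotopy.
Variables (R : realType) (Y : topologicalType) (S : set Y) (y0 : Y) (n : nat).
Implicit Types f g h : 'rV[R]_n -> Y.

Lemma rel_htpy_sym f g : rel_htpy S y0 f g -> rel_htpy S y0 g f.
Proof.
move=> [H [cH [HS [Hfg Hb]]]].
exists (fun p => H (p.1, -1 * p.2 + 1)); split; [|split; [|split]].
- apply: within_time_affine cH => -[t s] [/= ct /andP[s0 s1]]; split => //=.
  by apply/andP; split; lra.
- move=> [t s] [/= ct /andP[s0 s1]]; apply: HS; split => //=.
  by apply/andP; split; lra.
- move=> t ct /=; have [Hf Hg] := Hfg t ct.
  by rewrite mulr0 add0r mulr1 addNr.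
- move=> t s tb /andP[s0 s1]; apply: Hb => //; rewrite /unitI /=.
  by apply/andP; split; lra.
Qed.

Lemma rel_htpy_trans f g h :
  rel_htpy S y0 f g -> rel_htpy S y0 g h -> rel_htpy S y0 f h.
Proof.
move=> [H1 [cH1 [HS1 [Hfg1 Hb1]]]] [H2 [cH2 [HS2 [Hfg2 Hb2]]]].
pose H p := if p.2 <= 1/2 then H1 (p.1, 2 * p.2 + 0) else H2 (p.1, 2 * p.2 + -1).
pose A1 := [set p : 'rV[R]_n * R | ucube n p.1 /\ 0 <= p.2 <= 1/2].
pose A2 := [set p : 'rV[R]_n * R | ucube n p.1 /\ 1/2 <= p.2 <= 1].
have H_A2 p : A2 p -> H p = H2 (p.1, 2 * p.2 + -1).
  case: p => t s [/= ct /andP[s0 s1]]; rewrite /H /=.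
  case: ifPn => // sle; have -> : s = 1/2 by apply/eqP; rewrite eq_le sle s0.
  rewrite (_ : 2 * (1/2) + 0 = 1); last lra.
  rewrite (_ : 2 * (1/2) + -1 = 0); last lra.
  by have [_ ->] := Hfg1 t ct; have [-> _] := Hfg2 t ct.
exists H; split; [|split; [|split]].
- apply: (@continuous_subspaceW _ _ _ (A1 `|` A2)).
    move=> [t s] [/= ct /andP[s0 s1]]; case: (lerP s (1/2)) => sh.
      by left; split => //; apply/andP.
    by right; split => //; apply/andP; split => //; exact: ltW.
  apply: withinU_continuous; [exact: ucube_slab_closed|exact: ucube_slab_closed| |].
  + apply: (@subspace_eq_continuous _ A1 _ (fun p => H1 (p.1, 2 * p.2 + 0))).
      move=> [t s] /set_mem [/= ct /andP[s0 s1]].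
      by change (H1 (t, 2 * s + 0) = H (t, s)); rewrite /H /= s1.
    apply: within_time_affine cH1 => -[t s] [/= ct /andP[s0 s1]]; split => //=.
    by rewrite /unitI /=; apply/andP; split; lra.
  + apply: (@subspace_eq_continuous _ A2 _ (fun p => H2 (p.1, 2 * p.2 + -1))).
      by move=> p /set_mem /H_A2; rewrite /from_subspace => ->.
    apply: within_time_affine cH2 => -[t s] [/= ct /andP[s0 s1]]; split => //=.
    by rewrite /unitI /=; apply/andP; split; lra.
- move=> [t s] [/= ct /andP[s0 s1]]; rewrite /H /=; case: ifPn => sh.
    by apply: HS1; split => //=; rewrite /unitI /=; apply/andP; split; lra.
  by apply: HS2; split => //=; rewrite /unitI /=; apply/andP; split; rewrite -?ltNge in sh *; lra.
- move=> t ct; rewrite /H /= ifT; last lra.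
  rewrite ifF; last by apply/negbTE; rewrite -ltNge; lra.
  rewrite mulr0 addr0 mulr1 (_ : 2 + -1 = 1); last lra.
  by have [-> _] := Hfg1 t ct; have [_ ->] := Hfg2 t ct.
- move=> t s tb /andP[s0 s1]; rewrite /H /=; case: ifPn => sh.
    by apply: Hb1 => //; rewrite /unitI /=; apply/andP; split; lra.
  by apply: Hb2 => //; rewrite /unitI /=; apply/andP; split; rewrite -?ltNge in sh *; lra.
Qed.

End RelHomotopy.

Section MetricSpace.
Variables (R : realType) (X : metricType R).

Lemma compact_mdist_bounded (x0 : X) :
  compact [set: X] -> exists M : R, forall y, mdist x0 y < M.
Proof.
move=> cX.
pose P (M : R) (y : X) := mdist x0 y < M.
have : \forall M \near +oo, [set: X] `<=` P M.
  apply: ((compact_near_coveringP _).1 cX R +oo P) => x _.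
  exists (ball x 1, [set M : R | mdist x0 x + 1 < M]) => /=.
    by split; [apply: nbhsx_ballx; lra|apply: nbhs_pinfty_gt; exact: num_real].
  move=> [z M] /= [+ hM]; rewrite /P ballEmdist /= => xz.
  have := metric_triangle x0 x z; lra.
by move=> /filter_ex [M HM]; exists M => y; exact: HM.
Qed.

Lemma mdist_le_mu_dist n (f g : 'rV[R]_n -> X) t :
  compact [set: X] -> ucube n t -> mdist (f t) (g t) <= mu_dist f g.
Proof.
move=> cX ct; have [M HM] := compact_mdist_bounded (f t) cX.
(* [sup] of an unbounded set is a junk value: boundedness of [X] is essential. *)
apply: ub_le_sup; last by exists t.
exists (M + M) => _ [t' _ <-].
have := metric_triangle (f t') (f t) (g t').
rewrite (metric_sym (f t') (f t)).
have := HM (f t'); have := HM (g t'); lra.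
Qed.

Lemma pin_set_Omega x0 n (a : set ('rV[R]_n -> X)) alpha :
  pin_set x0 n a -> a alpha -> Omega x0 n alpha.
Proof. by move=> [gamma _ ->] []. Qed.

Lemma pin_set_htpy x0 n (a : set ('rV[R]_n -> X)) alpha beta :
  pin_set x0 n a -> a alpha -> a beta -> rel_htpy [set: X] x0 alpha beta.
Proof.
by move=> [gamma _ ->] [_ ga] [_ gb]; exact: rel_htpy_trans (rel_htpy_sym ga) gb.
Qed.

Lemma rho_dist_lt n (a b : set ('rV[R]_n -> X)) alpha beta (e : R) :
  a alpha -> b beta -> rho_dist a b < e ->
  exists alpha', exists2 beta', a alpha' /\ b beta' & mu_dist alpha' beta' < e.
Proof.
move=> aal bbe lt_e.
have [|_ [alpha' [beta' [aal' [bbe' ->]]]] lt_mu] := inf_lt _ lt_e.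
  by exists (mu_dist alpha beta), alpha, beta.
by exists alpha', beta'.
Qed.

End MetricSpace.

Section Nerve.
Variables (R : realType) (X : metricType R) (C : set (set X)) (phi : set X -> X -> R).
Hypotheses (hC : lf_open_cover C) (hphi : pou_subordinate C phi).

Lemma pou_ge0 U z : 0 <= phi U z.
Proof. by have [_ [h _]] := hphi. Qed.

Lemma pou_finite_support z : finite_set [set U | phi U z != 0].
Proof. by have [_ [_ [_ [_ h]]]] := hphi; have [] := h z. Qed.

Lemma pou_sum1 z : \sum_(U \in [set: set X]) phi U z = 1.
Proof. by have [_ [_ [_ [_ h]]]] := hphi; have [] := h z. Qed.

Lemma pou_support_subset U z : phi U z != 0 -> U z.
Proof.
have [_ [_ [_ [hcl _]]]] := hphi; move=> phiUz.
by apply: hcl; exact: subset_closure.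
Qed.

Lemma pou_support_cover U z : phi U z != 0 -> C U.
Proof.
have [_ [_ [h0 _]]] := hphi; move=> phiUz.
by apply: contrapT => nCU; move: phiUz; rewrite h0 // eqxx.
Qed.

Lemma pou_near_ball_subset U x : open U ->
  \forall r \near (0 : R)^'+, forall z, ball x r z -> phi U z != 0 -> ball x r `<=` U.
Proof.
move=> oU; have [_ [_ [_ [hcl _]]]] := hphi.
have [/hcl Ux|clx] := pselect (closure [set z | phi U z != 0] x).
  have /nbhs_ballP [r0 r00 r0U] : nbhs x U by exact: open_nbhs_nbhs.
  near=> r => z _ _; apply: subset_trans r0U; apply: le_ball.
  by apply: ltW; near: r; exact: nbhs_right_lt.
have [B nB sB] : exists2 B, nbhs x B & ~ ([set z | phi U z != 0] `&` B !=set0).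
  apply: contrapT => hn; apply: clx => B nB; apply: contrapT => hB.
  by apply: hn; exists B.
move: nB => /nbhs_ballP [r0 r00 r0B].
near=> r => z xz phiUz; exfalso; apply: sB; exists z; split => //.
apply: r0B; apply: le_ball xz; apply: ltW.
by near: r; exact: nbhs_right_lt.
Unshelve. all: by end_near.
Qed.

(* Local finiteness reduces the choice of [r] to finitely many members of [C]. *)
Lemma pou_ball_subset x : exists2 r : R, 0 < r &
  forall U z, ball x r z -> phi U z != 0 -> ball x r `<=` U.
Proof.
have [oC [_ lf]] := hC; have [N [Nx finN]] := lf x.
have [s Ss] := finite_fsetP.1 finN.
pose Q U r := forall z, ball x r z -> phi U z != 0 -> ball x r `<=` U.
have Q_s : \forall r \near (0 : R)^'+, forall U : set X, U \in s -> Q U r.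
  suff Q_U U : U \in s -> \forall r \near (0 : R)^'+, Q U r.
    by apply: filterS (filter_bigI _ Q_U) => r Qr U Us; exact: Qr.
  move=> Us; have : [set` s] U by [].
  by rewrite -Ss => -[/oC oU _]; exact: pou_near_ball_subset.
have ballN : \forall r \near (0 : R)^'+, ball x r `<=` N.
  move: Nx => /nbhs_ballP [r0 r00 r0N].
  near=> r; apply: subset_trans r0N; apply: le_ball; apply: ltW.
  by near: r; exact: nbhs_right_lt.
have [r [Qr [rN r0]]] := filter_ex (filterI Q_s (filterI ballN (nbhs_right_gt (0 : R)))).
exists r => // U z xz phiUz; have Us : U \in s.
  change ([set` s] U); rewrite -Ss; split; first exact: pou_support_cover phiUz.
  by exists z; split; [exact: pou_support_subset|exact: rN].
exact: Qr xz phiUz.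
Unshelve. all: by end_near.
Qed.

Lemma pou_lebesgue_number : compact [set: X] -> exists2 e : R, 0 < e &
  forall z y, ball z e y -> forall U, phi U z != 0 -> U y.
Proof.
move=> cX.
pose P (e : R) (z : X) := 0 < e -> forall y, ball z e y -> forall U, phi U z != 0 -> U y.
have Pe : (0 : R)^'+ [set e | [set: X] `<=` P e].
  apply: ((compact_near_coveringP _).1 cX R (0 : R)^'+ P) => x _.
  have [r r0 hr] := pou_ball_subset x.
  exists (ball x (r/2), [set e : R | e < r/2]) => /=.
    by split; [apply: nbhsx_ballx; lra|apply: nbhs_right_lt; lra].
  move=> [z e] /= [xz er] e0 y zy U phiUz.
  apply: (hr U z (le_ball _ xz) phiUz); first lra.
  by apply: le_ball (ball_triangle xz zy); lra.
have [e [Pe' e0]] := filter_ex (filterI Pe (nbhs_right_gt (0 : R))).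
by exists e => // z y zy U; exact: Pe' z I e0 y zy U.
Qed.

Lemma canon_map_continuous : continuous (canon_map phi : X -> {ptws set X -> R}).
Proof. by have [hc _] := hphi; move=> x; apply: ptws_cvg => U; exact: hc. Qed.

Definition bary_comb (l : R) (v w : {ptws set X -> R}) : {ptws set X -> R} :=
  fun U => (1 - l) * v U + l * w U.

Lemma bary_comb_nerve_real y z w l : 0 <= l <= 1 ->
  (forall U, phi U y != 0 -> U w) -> (forall U, phi U z != 0 -> U w) ->
  nerve_real C (bary_comb l (canon_map phi y) (canon_map phi z)).
Proof.
move=> /andP[l0 l1] hy hz; rewrite /bary_comb /canon_map.
pose Sf := [set U | phi U y != 0] `|` [set U | phi U z != 0].
have finSf : finite_set Sf by rewrite finite_setU; split; exact: pou_finite_support.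
have out U : ~ Sf U -> phi U y = 0 /\ phi U z = 0.
  by move=> nS; split; apply/eqP; apply: contrapT => h; apply: nS; [left|right]; exact/negP.
have nz U : (1 - l) * phi U y + l * phi U z != 0 -> phi U y != 0 \/ phi U z != 0.
  move=> h; apply: contrapT => /not_orP [/negP/negPn/eqP h1 /negP/negPn/eqP h2].
  by move: h; rewrite h1 h2 !mulr0 addr0 eqxx.
split; [|split; [|split; [|split]]].
- move=> U; apply: addr_ge0; apply: mulr_ge0; rewrite ?subr_ge0 //; exact: pou_ge0.
- exact: sub_finite_set nz finSf.
- rewrite (fsbig_setT_support finSf); last first.
    by move=> U /out [-> ->]; rewrite !mulr0 addr0.
  have ey : \sum_(U \in Sf) phi U y = 1.
    by rewrite -(fsbig_setT_support finSf) ?pou_sum1 // => U /out [].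
  have ez : \sum_(U \in Sf) phi U z = 1.
    by rewrite -(fsbig_setT_support finSf) ?pou_sum1 // => U /out [].
  move: ey ez; rewrite !fsbig_finite // big_split /= -!mulr_sumr => -> ->.
  by rewrite !mulr1 subrK.
- by move=> U /nz [] /pou_support_cover.
- by exists w => U /nz [/hy|/hz].
Qed.

Lemma canon_map_nerve_real x : nerve_real C (canon_map phi x).
Proof.
have -> : canon_map phi x = bary_comb 0 (canon_map phi x) (canon_map phi x).
  by apply/funext => U; rewrite /bary_comb subr0 mul1r mul0r addr0.
by apply: (bary_comb_nerve_real (w := x)); rewrite ?lexx ?ler01 //;
  move=> U; exact: pou_support_subset.
Qed.

Lemma canon_map_vertex x0 U0 : phi U0 x0 = 1 -> canon_map phi x0 = nerve_vertex U0.
Proof.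
move=> phi1; apply/funext => U; rewrite /canon_map /nerve_vertex.
case: eqP => [-> //|nU].
have := pou_sum1 x0; rewrite (fsbig_setT_support (pou_finite_support x0)); last first.
  by move=> V /= nV; apply/eqP; apply: contrapT => /negP.
rewrite (fsbigD1 U0) ?phi1 //=; last by rewrite phi1 oner_neq0.
  2: exact: pou_finite_support.
move=> /eqP; rewrite -[X in _ == X]addr0 (inj_eq (addrI _)) => /eqP sum0.
apply/eqP; apply: contrapT => /negP phiU.
have : phi U x0 = 0.
  apply: (pfsumr_eq0 _ _ sum0).
  - by apply: finite_setD; exact: pou_finite_support.
  - by move=> V _; exact: pou_ge0.
  - by split => //= /eqP.
by move/eqP; rewrite (negbTE phiU).
Qed.

Lemma within_pou_comp n U (a : 'rV[R]_n -> X) : {within ucube n, continuous a} ->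
  {within ucube n `*` @unitI R, continuous (fun q : 'rV[R]_n * R => phi U (a q.1))}.
Proof.
have [hc _] := hphi; move=> ca.
apply: (@continuous_within_comp _ _ _ _ [set: X] (a \o fst)) => //.
  apply: (continuous_within_comp (B := ucube n)) => //; first by move=> q [].
  exact/continuous_subspaceT/fst_continuous.
exact/continuous_subspaceT/hc.
Qed.

Lemma canon_map_htpy n x0 U0 (alpha beta : 'rV[R]_n -> X) : phi U0 x0 = 1 ->
  rel_htpy [set: X] x0 alpha beta ->
  rel_htpy (nerve_real C) (nerve_vertex U0)
    (canon_map phi \o alpha) (canon_map phi \o beta).
Proof.
move=> phi1 [H [cH [_ [Hab Hb]]]].
exists (canon_map phi \o H); split; [|split; [|split]].
- apply: (continuous_within_comp (B := [set: X])) => //.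
  exact/continuous_subspaceT/canon_map_continuous.
- by move=> q _; exact: canon_map_nerve_real.
- by move=> t ct /=; have [-> ->] := Hab t ct.
- by move=> t s tb si /=; rewrite Hb // (canon_map_vertex phi1).
Qed.

Lemma canon_map_segment_htpy n x0 U0 (alpha beta : 'rV[R]_n -> X) :
  phi U0 x0 = 1 -> Omega x0 n alpha -> Omega x0 n beta ->
  (forall t, ucube n t -> forall U, phi U (beta t) != 0 -> U (alpha t)) ->
  rel_htpy (nerve_real C) (nerve_vertex U0)
    (canon_map phi \o alpha) (canon_map phi \o beta).
Proof.
move=> phi1 [ca [_ ba]] [cb [_ bb]] hab.
exists (fun q => bary_comb q.2 (canon_map phi (alpha q.1)) (canon_map phi (beta q.1))).
split; [|split; [|split]].
- move=> q; apply: ptws_cvg => U /=; rewrite /bary_comb /canon_map /=.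
  have cs : {within ucube n `*` @unitI R, continuous (fun q : 'rV[R]_n * R => q.2)}.
    exact/continuous_subspaceT/snd_continuous.
  apply: cvgD; apply: cvgM.
  + by apply: cvgB; [exact: cvg_cst|exact: cs].
  + exact: within_pou_comp.
  + exact: cs.
  + exact: within_pou_comp.
- move=> [t s] [/= ct si]; apply: (@bary_comb_nerve_real _ _ (alpha t)) => //.
  + by move=> U; exact: pou_support_subset.
  + exact: hab.
- move=> t ct; split; apply/funext => U; rewrite /bary_comb /=.
    by rewrite subr0 mul1r mul0r addr0.
  by rewrite subrr mul0r add0r mul1r.
- move=> t s tb si; rewrite ba // bb // -(canon_map_vertex phi1).
  by apply/funext => U; rewrite /bary_comb -mulrDl subrK mul1r.
Qed.

Lemma canon_map_htpy_uniformly_close n x0 U0 :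
  compact [set: X] -> phi U0 x0 = 1 ->
  exists2 e : R, 0 < e & forall alpha beta : 'rV[R]_n -> X,
    Omega x0 n alpha -> Omega x0 n beta -> mu_dist alpha beta < e ->
    rel_htpy (nerve_real C) (nerve_vertex U0)
      (canon_map phi \o alpha) (canon_map phi \o beta).
Proof.
move=> cX phi1; have [e e0 He] := pou_lebesgue_number cX.
exists e => // alpha beta Oal Obe lt_e.
apply: (canon_map_segment_htpy phi1) => // t ct U phiU.
apply: (He (beta t)) phiU; rewrite ballEmdist /= metric_sym.
by apply: le_lt_trans lt_e; exact: mdist_le_mu_dist.
Qed.

End Nerve.

Theorem proposition5p2 (R : realType) (X : metricType R) (x0 : X) (n : nat) :
  compact [set: X] -> path_conn X -> (1 <= n)%N ->
  forall V : set (set ('rV[R]_n -> X)),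
    shape_open x0 n V -> rho_open x0 n V.
Proof.
move=> cX _ _ V [Vpin HV]; split=> // a Va.
have [C [U0 [phi [hC _ _ [hphi phi1] Va_coset]]]] := HV a Va.
have [e e0 He] := canon_map_htpy_uniformly_close hC hphi n cX phi1.
exists e => // b pb rab; apply: Va_coset => // alpha beta aal bbe.
have [alpha' [beta' [aal' bbe'] lt_e]] := rho_dist_lt aal bbe rab.
have pa := Vpin a Va.
have p_alpha := canon_map_htpy hphi phi1 (pin_set_htpy pa aal aal').
have p_close := He _ _ (pin_set_Omega pa aal') (pin_set_Omega pb bbe') lt_e.
have p_beta := canon_map_htpy hphi phi1 (pin_set_htpy pb bbe' bbe).
exact: rel_htpy_trans p_alpha (rel_htpy_trans p_close p_beta).
Qed.
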